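(* Let $B$ be a $p\times q$ matrix, $G$ a $q\times q$ symmetric matrix and $G'$ a $p\times p$ symmetric matrix, and let $E,F$ be $q\times q$ symmetric matrices with $E+F=G$. Let $$A=\begin{bmatrix} G' & B & B\\ B^T & 0 & G\\ B^T & G & 0\end{bmatrix},\qquad D=\begin{bmatrix} G' & B & B\\ B^T & E & F\\ B^T & F & E\end{bmatrix},$$ both of size $(p+2q)\times(p+2q)$. Then $A\oplus\begin{bmatrix} E & F\\ F & E\end{bmatrix}$ and $D\oplus\begin{bmatrix}0 & G\\ G & 0\end{bmatrix}$ are cospectral.
   Context: For matrices $X,Y$, $X\oplus Y=\begin{bmatrix} X&0\\0&Y\end{bmatrix}$, and $0$ denotes a zero matrix of appropriate size. Two square matrices are cospectral if they have the same eigenvalues with the same multiplicities. *)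

From mathcomp Require Import all_boot all_algebra.
Set Implicit Arguments. Unset Strict Implicit. Unset Printing Implicit Defensive.
Import GRing.Theory Num.Theory.
Local Open Scope ring_scope.

Definition dsum (R : nzRingType) m n (X : 'M[R]_m) (Y : 'M[R]_n) : 'M[R]_(m + n) :=
  block_mx X 0 0 Y.

Definition cospectral (R : realFieldType) n (X Y : 'M[R]_n) : Prop :=
  forall a : R, mup a (char_poly X) = mup a (char_poly Y).

From mathcomp Require Import all_boot all_algebra.
Import GRing.Theory Num.Theory.
Set Implicit Arguments. Unset Strict Implicit. Unset Printing Implicit Defensive.
Local Open Scope ring_scope.

(* Subtracting the middle block row from the last one and then adding the last
   block column to the middle one is a unimodular similarity turning
   [[G', B, B], [C, X, Y], [C, Y, X]] into a block upper triangular matrix with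
   diagonal blocks [[G', 2B], [C, X + Y]] and X - Y; likewise [[X, Y], [Y, X]]
   is similar to a block upper triangular matrix with diagonal X + Y, X - Y.
   Hence both sides of the theorem have characteristic polynomial
   chi([[G', 2B], [B^T, G]]) chi(-G) chi(G) chi(E - F). *)

Lemma char_poly_castmx (R : nzRingType) m n (e : m = n) (X : 'M[R]_m) :
  char_poly (castmx (e, e) X) = char_poly X.
Proof. by case: n / e; rewrite castmx_id. Qed.

Lemma char_poly_ublock (R : comNzRingType) m n
    (X : 'M[R]_m) (U : 'M[R]_(m, n)) (Y : 'M[R]_n) :
  char_poly (block_mx X U 0 Y) = char_poly X * char_poly Y.
Proof.
rewrite /char_poly /char_poly_mx map_block_mx map_mx0 (scalar_mx_block m n).
by rewrite opp_block_mx add_block_mx oppr0 addr0 det_ublock.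
Qed.

Lemma char_poly_similar (R : comUnitRingType) n (S X Y : 'M[R]_n) :
  S \in unitmx -> S *m X = Y *m S -> char_poly X = char_poly Y.
Proof.
move=> S_unit SX_YS; pose Sp := map_mx polyC S; pose Sp' := map_mx polyC (invmx S).
have char_mx_sim : Sp *m char_poly_mx X = char_poly_mx Y *m Sp.
  by rewrite /char_poly_mx mulmxBr mulmxBl -!map_mxM SX_YS mul_mx_scalar mul_scalar_mx.
have det_Sp'Sp : \det Sp' * \det Sp = 1.
  by rewrite -det_mulmx -map_mxM mulVmx // map_mx1 det1.
rewrite /char_poly -[LHS]mul1r -det_Sp'Sp -mulrA -det_mulmx char_mx_sim.
by rewrite det_mulmx mulrCA det_Sp'Sp mulr1.
Qed.

Section BlockSymmetric.
Variables (R : comUnitRingType) (p q : nat).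

Let shear : 'M[R]_(q + q) := block_mx 1%:M 0 (- 1%:M) 1%:M.

Let shear_unit : shear \in unitmx.
Proof. by rewrite unitmxE det_lblock !det1 mulr1 unitr1. Qed.

Let shear_block_sym (X Y : 'M[R]_q) :
  shear *m block_mx X Y Y X = block_mx (X + Y) Y 0 (X - Y) *m shear.
Proof.
rewrite !mulmx_block !mul1mx !mulmx1 !mul0mx !mulmx0 !mulNmx !mul1mx !mulmxN.
by rewrite !mulmx1 !addr0 !add0r; congr block_mx; rewrite ?addrK ?opprB // addrC.
Qed.

Lemma char_poly_block_sym (X Y : 'M[R]_q) :
  char_poly (block_mx X Y Y X) = char_poly (X + Y) * char_poly (X - Y).
Proof.
rewrite -(char_poly_ublock (X + Y) Y).
exact: char_poly_similar shear_unit (shear_block_sym X Y).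
Qed.

Lemma char_poly_bordered_block_sym
    (G' : 'M[R]_p) (B : 'M[R]_(p, q)) (C : 'M[R]_(q, p)) (X Y : 'M[R]_q) :
  char_poly (block_mx G' (row_mx B B) (col_mx C C) (block_mx X Y Y X)) =
  char_poly (block_mx G' (B *+ 2) C (X + Y)) * char_poly (X - Y).
Proof.
pose S : 'M[R]_(p + (q + q)) := block_mx 1%:M 0 0 shear.
have S_unit : S \in unitmx.
  by rewrite unitmxE det_ublock det1 mul1r -unitmxE shear_unit.
transitivity (char_poly
  (block_mx G' (row_mx (B *+ 2) B) (col_mx C 0) (block_mx (X + Y) Y 0 (X - Y)))).
  apply: (char_poly_similar S_unit).
  rewrite mulmx_block [RHS]mulmx_block !mul1mx !mulmx1 !mul0mx !mulmx0 !addr0 !add0r.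
  rewrite shear_block_sym mul_row_block mul_block_col !mul1mx !mulmx1 mul0mx mulmx0.
  by rewrite mulNmx mulmxN mul1mx mulmx1 addNr add0r addr0 mulr2n addrK.
by rewrite block_mxA char_poly_castmx row_mx0 char_poly_ublock.
Qed.
End BlockSymmetric.

Theorem theorem3p18 (R : realFieldType) (p q : nat)
  (B : 'M[R]_(p, q)) (G : 'M[R]_q) (G' : 'M[R]_p) (E F : 'M[R]_q) :
  G^T = G -> G'^T = G' -> E^T = E -> F^T = F -> E + F = G ->
  let A : 'M[R]_(p + (q + q)) :=
    block_mx G' (row_mx B B) (col_mx B^T B^T) (block_mx 0 G G 0) in
  let D : 'M[R]_(p + (q + q)) :=
    block_mx G' (row_mx B B) (col_mx B^T B^T) (block_mx E F F E) in
  cospectral (dsum A (block_mx E F F E)) (dsum D (block_mx 0 G G 0)).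
Proof.
move=> _ _ _ _ EFG A D a; congr mup.
rewrite /dsum !char_poly_ublock !char_poly_bordered_block_sym !char_poly_block_sym.
by rewrite EFG !add0r mulrACA [RHS]mulrACA (mulrC (char_poly (- G))).
Qed.
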